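(* Let $q\ge 2$ be a prime power, $n=q^2(q^2-q+1)$, $m=2^{24}q^2$, and let $X\subseteq V(H_q)$ with $|X|=m$. Then at least one of the following holds: (a) $\displaystyle\sum_{T\in\mathcal T_X,\ |T|\le \sqrt{2m}/\log n}\binom{|T|}{2}\;\ge\;\frac{m^2}{64q}$; (b) $\displaystyle\sum_{T\in\mathcal T_X,\ \sqrt{2m}/\log n<|T|\le \sqrt{2m}}\binom{|T|}{2}\;\ge\;\frac{q\,m^{3/2}}{16\log^2 n}$. (Each sum counts the edges of $H_q[X]$ lying in the cliques of $\mathcal T_X$ of the indicated orders.)
   Context: $\mathcal H$ is the Hermitian unital $\{\langle x,y,z\rangle : x^{q+1}+y^{q+1}+z^{q+1}=0\}$ in the projective plane $\mathrm{PG}(2,q^2)$ (it has $q^3+1$ points and every line meets it in $1$ or $q+1$ points; lines meeting it in $q+1$ points are secants). $H_q$ is the graph on the set of secants, two distinct secants adjacent iff they meet in a point of $\mathcal H$. For $P\in\mathcal H$, $C_P$ is the set of secants through $P$ and $\mathcal C=\{C_P:P\in\mathcal H\}$; these are $q^3+1$ cliques of order $q^2$, any two sharing exactly one vertex, every vertex lies in exactly $q+1$ of them, and every edge of $H_q$ lies in exactly one of them. For $X\subseteq V(H_q)$, $\mathcal T_X=\{X\cap C : C\in\mathcal C,\ |X\cap C|\ge 2\}$ (indexed by the cliques $C$). Logarithms are natural. *)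

From HB Require Import structures.
From mathcomp Require Import all_boot all_order all_algebra all_field.
From mathcomp Require Import reals exp.
Set Implicit Arguments. Unset Strict Implicit. Unset Printing Implicit Defensive.
Import Order.TTheory GRing.Theory Num.Theory.
Local Open Scope ring_scope.

Section Hermitian.
Variable F : finFieldType.
Implicit Types (q : nat).

Definition vec := 'rV[F]_3.

Definition proj_pt (v : vec) : {set vec} := [set a *: v | a in [set a : F | a != 0]].

Definition PG_points : {set {set vec}} := [set proj_pt v | v in [set v : vec | v != 0]].

Definition proj_line (l : vec) : {set {set vec}} :=
  [set proj_pt v | v in [set v : vec | (v != 0) && (\sum_(i < 3) v 0 i * l 0 i == 0)]].

Definition PG_lines : {set {set {set vec}}} := [set proj_line l | l in [set l : vec | l != 0]].

Definition herm (q : nat) (v : vec) : bool :=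
  v 0 0 ^+ q.+1 + v 0 1 ^+ q.+1 + v 0 2 ^+ q.+1 == 0.

Definition unital (q : nat) : {set {set vec}} :=
  [set proj_pt v | v in [set v : vec | (v != 0) && herm q v]].

(* secants: lines meeting H in q+1 points; these are the vertices of H_q *)
Definition secants (q : nat) : {set {set {set vec}}} :=
  [set L in PG_lines | #|L :&: unital q| == q.+1].

Definition clique (q : nat) (P : {set vec}) : {set {set {set vec}}} :=
  [set L in secants q | P \in L].

Definition Tsize (q : nat) (X : {set {set {set vec}}}) (P : {set vec}) : nat :=
  #|X :&: clique q P|.

End Hermitian.

Definition prime_power (q : nat) : Prop := exists p k : nat, prime p /\ q = (p ^ k)%N.

From Pilot Require Import Defs.
From HB Require Import structures.
From mathcomp Require Import all_boot all_order all_algebra all_field.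
From mathcomp Require Import reals sequences exp.
From mathcomp Require Import ring lra zify.
Import Order.TTheory GRing.Theory Num.Theory.
Local Open Scope ring_scope.
Set Implicit Arguments. Unset Strict Implicit. Unset Printing Implicit Defensive.

(* Write t_P = |X ∩ C_P|. Every secant carries q+1 points of the unital, so
   Σ_P t_P = m(q+1), and two points of PG(2,F) lie on at most one line.  The
   latter makes Σ_L |L ∩ A|^2 at most Σ_{P∈A} t_P + |A|^2, and Cauchy-Schwarz
   over the m secants then bounds the total weight of the points with
   t_P > √(2m) by 2m.  If (a) fails, Cauchy-Schwarz over the at most 2q^3
   unital points bounds the weight of the points with 2 <= t_P <= √(2m)/log n
   by 3qm/8; points with t_P <= 1 weigh at most 2q^3, so the middle range weighs
   at least 5qm/56, and each of its points has C(t_P,2) >= t_P √(2m)/(4 log n),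
   which gives (b). *)

(** * The projective plane over a finite field *)

Section ProjectivePlane.
Variable F : finFieldType.
Local Notation vec := (Defs.vec F).
Implicit Types (u v w l : vec) (c : F).

Definition dot u l : F := \sum_(i < 3) u 0 i * l 0 i.

Definition cross u v : vec :=
  \row_(i < 3) nth 0 [:: u 0 1 * v 0 2 - u 0 2 * v 0 1;
                         u 0 2 * v 0 0 - u 0 0 * v 0 2;
                         u 0 0 * v 0 1 - u 0 1 * v 0 0] i.

Lemma dotE u l : dot u l = u 0 0 * l 0 0 + u 0 1 * l 0 1 + u 0 2 * l 0 2.
Proof.
rewrite /dot !big_ord_recr big_ord0 /= add0r.
by congr (_ + _ + _); congr (_ * _); congr (_ _ _); apply: val_inj.
Qed.

Lemma dotZl c u l : dot (c *: u) l = c * dot u l.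
Proof. by rewrite /dot mulr_sumr; apply: eq_bigr => i _; rewrite mxE mulrA. Qed.

Lemma dotZr c u l : dot u (c *: l) = c * dot u l.
Proof. by rewrite /dot mulr_sumr; apply: eq_bigr => i _; rewrite mxE mulrCA. Qed.

Lemma row3P u v : u 0 0 = v 0 0 -> u 0 1 = v 0 1 -> u 0 2 = v 0 2 -> u = v.
Proof.
move=> e0 e1 e2; apply/rowP => -[[|[|[|//]]] i3];
  [rewrite (_ : Ordinal i3 = 0) | rewrite (_ : Ordinal i3 = 1) |
   rewrite (_ : Ordinal i3 = 2)] => //; exact: val_inj.
Qed.

Lemma row3_neq0 u : u != 0 -> [\/ u 0 0 != 0, u 0 1 != 0 | u 0 2 != 0].
Proof.
move=> u0; case: (eqVneq (u 0 0) 0) => [e0|]; last by constructor 1.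
case: (eqVneq (u 0 1) 0) => [e1|]; last by constructor 2.
case: (eqVneq (u 0 2) 0) => [e2|]; last by constructor 3.
by move: u0; rewrite (@row3P u 0) ?mxE ?eqxx.
Qed.

Lemma cross_eq0 u v : u != 0 -> cross u v = 0 -> exists c, v = c *: u.
Proof.
move=> /row3_neq0 u0 /rowP uv0.
have /eqP := uv0 0; have /eqP := uv0 1; have /eqP := uv0 2.
rewrite !mxE /= !subr_eq0 => /eqP e2 /eqP e1 /eqP e0.
case: u0 => ui0; [exists (v 0 0 / u 0 0) | exists (v 0 1 / u 0 1) |
  exists (v 0 2 / u 0 2)]; apply: row3P; rewrite mxE; apply: (mulfI ui0);
  by rewrite mulrA [_ * (_ / _)]mulrC divfK // [RHS]mulrC ?e0 ?e1 ?e2.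
Qed.

Lemma cross_cross u l l' : cross u (cross l l') = dot u l' *: l - dot u l *: l'.
Proof. by apply: row3P; rewrite !mxE /= !dotE; ring. Qed.

Lemma cross_common u l l' : u != 0 -> dot u l = 0 -> dot u l' = 0 ->
  exists c, cross l l' = c *: u.
Proof.
by move=> u0 ul ul'; apply: cross_eq0 u0 _; rewrite cross_cross ul ul' !scale0r subr0.
Qed.

Lemma two_points_two_lines u u' l l' : u != 0 -> u' != 0 -> l != 0 ->
    dot u l = 0 -> dot u' l = 0 -> dot u l' = 0 -> dot u' l' = 0 ->
  (exists c, u' = c *: u) \/ (exists c, l' = c *: l).
Proof.
move=> u0 u'0 l0 ul u'l ul' u'l'.
have [ll'0 | ll'0] := eqVneq (cross l l') 0; first by right; exact: cross_eq0.
have [c ec] := cross_common u0 ul ul'.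
have [c' ec'] := cross_common u'0 u'l u'l'.
have c'0 : c' != 0 by apply: contra_neq ll'0 => c'0; rewrite ec' c'0 scale0r.
by left; exists (c'^-1 * c); rewrite -scalerA -ec ec' scalerA mulVf ?scale1r.
Qed.

Lemma proj_ptZ c u : c != 0 -> proj_pt (c *: u) = proj_pt u.
Proof.
move=> c0; apply/setP => x; apply/imsetP/imsetP => -[a]; rewrite inE => a0 ->.
- by exists (a * c); rewrite ?scalerA // inE mulf_neq0.
- by exists (a / c); rewrite ?scalerA ?divfK // inE mulf_neq0 ?invr_eq0.
Qed.

Lemma proj_pt_id u : u \in proj_pt u.
Proof. by apply/imsetP; exists 1; rewrite ?scale1r // inE oner_eq0. Qed.

Lemma proj_lineZ c l : c != 0 -> proj_line (c *: l) = proj_line l.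
Proof.
move=> c0; apply/setP => P; apply/imsetP/imsetP => -[v vl ->]; exists v => //;
  by move: vl; rewrite !inE -![\sum_(i < 3) _]/(dot v _) dotZr mulf_eq0 (negbTE c0).
Qed.

Lemma dot_eq0_on_line u l : u != 0 -> proj_pt u \in proj_line l -> dot u l = 0.
Proof.
move=> u0 /imsetP[v]; rewrite inE => /andP[_ /eqP vl] uv.
by have := proj_pt_id u; rewrite uv => /imsetP[a _ ->]; rewrite dotZl [dot v l]vl mulr0.
Qed.

Lemma unital_sub_PG_points q : unital F q \subset PG_points F.
Proof. by apply: imsetS; apply/subsetP => v; rewrite !inE => /andP[]. Qed.

Lemma PG_line_uniq (P P' : {set vec}) (L L' : {set {set vec}}) :
    P \in PG_points F -> P' \in PG_points F -> P != P' ->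
    L \in PG_lines F -> L' \in PG_lines F ->
  P \in L -> P' \in L -> P \in L' -> P' \in L' -> L = L'.
Proof.
move=> /imsetP[u]; rewrite inE => u0 -> /imsetP[u']; rewrite inE => u'0 ->.
move=> uu' /imsetP[l]; rewrite inE => l0 -> /imsetP[l']; rewrite inE => l'0 ->.
move=> /(dot_eq0_on_line u0) ul /(dot_eq0_on_line u'0) u'l.
move=> /(dot_eq0_on_line u0) ul' /(dot_eq0_on_line u'0) u'l'.
have [[c ec] | [c ec]] := two_points_two_lines u0 u'0 l0 ul u'l ul' u'l'.
- have c0 : c != 0 by apply: contra_neq u'0 => c0; rewrite ec c0 scale0r.
  by move: uu'; rewrite ec proj_ptZ // eqxx.
- have c0 : c != 0 by apply: contra_neq l'0 => c0; rewrite ec c0 scale0r.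
  by rewrite ec proj_lineZ.
Qed.

Lemma card_Xn_eq_le c k : (0 < k)%N -> (#|[set x : F | x ^+ k == c]| <= k)%N.
Proof.
move=> k0; have p0 : ('X^k - c%:P : {poly F}) != 0 by rewrite -size_poly_eq0 size_XnsubC.
have := @max_poly_roots _ _ (enum [set x : F | x ^+ k == c]) p0.
rewrite enum_uniq size_XnsubC // -cardE ltnS; apply => //.
by apply/allP => x; rewrite mem_enum inE /root !hornerE subr_eq0.
Qed.

Lemma hermZ q c v : herm q v -> herm q (c *: v).
Proof. by rewrite /herm !mxE !exprMn -!mulrDr => /eqP ->; rewrite mulr0. Qed.

Definition herm_slice q z := [set w : vec | herm q w && (w 0 2 == z)].
Definition herm_fiber q y z := [set w in herm_slice q z | w 0 1 == y].

Lemma card_herm_fiber q y z : (#|herm_fiber q y z| <= q.+1)%N.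
Proof.
rewrite -(card_in_imset (f := fun w : vec => w 0 0)); last first.
  move=> w w'; rewrite !inE => /andP[/andP[_ /eqP w2] /eqP w1].
  by move=> /andP[/andP[_ /eqP w'2] /eqP w'1] w0; apply: row3P; rewrite ?w1 ?w'1 ?w2 ?w'2.
apply: leq_trans (card_Xn_eq_le (- (y ^+ q.+1 + z ^+ q.+1)) (ltn0Sn q)).
apply: subset_leq_card; apply/subsetP => _ /imsetP[w + ->].
rewrite !inE => /andP[/andP[hw /eqP w2] /eqP w1].
by move: hw; rewrite /herm w1 w2 -addrA addr_eq0.
Qed.

Lemma card_herm_slice q z : (#|herm_slice q z| <= #|F| * q.+1)%N.
Proof.
rewrite -sum1_card (partition_big (fun w : vec => w 0 1) predT) //= -sum_nat_const.
apply: leq_sum => y _; rewrite sum1dep_card; apply: leq_trans (card_herm_fiber q y z).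
by apply: subset_leq_card; apply/subsetP => w; rewrite !inE.
Qed.

Lemma unital_sub_proj_slices q :
  unital F q \subset @proj_pt F @: (herm_slice q 1 :|: herm_fiber q 1 0).
Proof.
apply/subsetP => P /imsetP[v]; rewrite inE => /andP[v0 hv] ->.
have [v2 | v2] := eqVneq (v 0 2) 0.
  have [v1 | v1] := eqVneq (v 0 1) 0.
    have v00 : v 0 0 = 0.
      by apply/eqP; move: hv; rewrite /herm v1 v2 expr0n /= !addr0 expf_eq0.
    by case: (row3_neq0 v0); rewrite ?v00 ?v1 ?v2 eqxx.
  apply/imsetP; exists ((v 0 1)^-1 *: v); last by rewrite proj_ptZ ?invr_eq0.
  by rewrite !inE hermZ // !mxE v2 mulr0 mulVf // !eqxx orbT.
apply/imsetP; exists ((v 0 2)^-1 *: v); last by rewrite proj_ptZ ?invr_eq0.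
by rewrite !inE hermZ // !mxE mulVf // eqxx.
Qed.

Lemma card_unital_le q : (#|unital F q| <= (#|F| + 1) * q.+1)%N.
Proof.
apply: leq_trans (subset_leq_card (unital_sub_proj_slices q)) _.
apply: leq_trans (leq_imset_card _ _) _; apply: leq_trans (leq_card_setU _ _) _.
by rewrite mulnDl mul1n leq_add ?card_herm_slice ?card_herm_fiber.
Qed.

End ProjectivePlane.

(** * Double counting in a linear space *)

Lemma card_sep_sum (I : finType) (A : {set I}) (p : pred I) :
  #|[set x in A | p x]| = (\sum_(x in A) p x)%N.
Proof. by rewrite -sum1dep_card big_mkcondr; apply: eq_bigr => x _; case: (p x). Qed.

Lemma sqr_sum_le_card_sum_sqr (R : realFieldType) (I : finType) (A : {pred I}) (x : I -> R) :
  (\sum_(i in A) x i) ^+ 2 <= #|A|%:R * \sum_(i in A) x i ^+ 2.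
Proof.
set S := \sum_(i in A) x i; set S2 := \sum_(i in A) x i ^+ 2.
have dev_ge0 : 0 <= \sum_(i in A) \sum_(j in A) (x i - x j) ^+ 2.
  by do 2![apply: sumr_ge0 => ? _]; exact: sqr_ge0.
suff e : \sum_(i in A) \sum_(j in A) (x i - x j) ^+ 2 = 2 * (#|A|%:R * S2 - S ^+ 2).
  by rewrite e pmulr_rge0 // subr_ge0 in dev_ge0.
transitivity (\sum_(i in A) (#|A|%:R * x i ^+ 2 - 2 * x i * S + S2)).
  apply: eq_bigr => i _; rewrite -sumr_const mulr_suml mulr_sumr -!sumrB -big_split /=.
  by apply: eq_bigr => j _; ring.
rewrite !big_split /= sumrN -mulr_suml -!mulr_sumr sumr_const -/S -/S2 -[S2 *+ _]mulr_natr.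
by ring.
Qed.

Section Incidence.
Variables (T : finType) (X : {set {set T}}).

Definition degree P := #|[set L in X | P \in L]|.
Definition codegree P P' := #|[set L in X | (P \in L) && (P' \in L)]|.

Lemma card_meet_sum (A : {set T}) L : #|L :&: A| = (\sum_(P in A) (P \in L))%N.
Proof. by rewrite -card_sep_sum; apply: eq_card => P; rewrite !inE andbC. Qed.

Lemma sum_degree (A : {set T}) :
  (\sum_(P in A) degree P = \sum_(L in X) #|L :&: A|)%N.
Proof.
under eq_bigr do rewrite /degree card_sep_sum.
by rewrite exchange_big; apply: eq_bigr => L _; rewrite card_meet_sum.
Qed.

Lemma sum_sqr_card_meet (A : {set T}) :
  (\sum_(L in X) #|L :&: A| ^ 2 = \sum_(P in A) \sum_(P' in A) codegree P P')%N.
Proof.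
under eq_bigr do rewrite card_meet_sum expnS expn1 big_distrl /=.
under eq_bigr do under eq_bigr do rewrite big_distrr /=.
rewrite exchange_big; apply: eq_bigr => P _; rewrite exchange_big.
apply: eq_bigr => P' _; rewrite /codegree card_sep_sum; apply: eq_bigr => L _.
by case: (P \in L); case: (P' \in L).
Qed.

Section Linear.
Variable A : {set T}.
Hypothesis codegree_le1 :
  forall P P', P \in A -> P' \in A -> P != P' -> (codegree P P' <= 1)%N.

Lemma sum_sqr_card_meet_le :
  (\sum_(L in X) #|L :&: A| ^ 2 <= \sum_(P in A) degree P + #|A| ^ 2)%N.
Proof.
rewrite sum_sqr_card_meet expnS expn1 -sum_nat_const -big_split /=.
apply: leq_sum => P PA; rewrite (bigD1 P) //= leq_add //.
  by apply: eq_leq; apply: eq_card => L; rewrite !inE andbb.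
apply: (@leq_trans (\sum_(P' in A | P' != P) 1)).
  by apply: leq_sum => P' /andP[P'A P'P]; rewrite codegree_le1 // eq_sym.
by rewrite sum1dep_card subset_leq_card //; apply/subsetP => P'; rewrite inE => /andP[].
Qed.

Lemma sum_large_degree_le (R : realFieldType) (s : R) :
    0 <= s -> s ^+ 2 = 2 * #|X|%:R -> (forall P, P \in A -> s < (degree P)%:R) ->
  (\sum_(P in A) degree P <= 2 * #|X|)%N.
Proof.
move=> s0 s2 large; rewrite -(ler_nat R) natrM.
set D := \sum_(P in A) degree P; set a := #|A|; set M := #|X|.
have cauchy : (D%:R : R) ^+ 2 <= M%:R * (D + a ^ 2)%:R.
  have := sqr_sum_le_card_sum_sqr (mem X) (fun L => (#|L :&: A|)%:R : R).
  rewrite -natr_sum -sum_degree -/D => /le_trans; apply; rewrite ler_wpM2l //.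
  by under eq_bigr do rewrite -natrX; rewrite -natr_sum ler_nat sum_sqr_card_meet_le.
have as_le : a%:R * s <= D%:R.
  rewrite -sumr_const mulr_suml natr_sum; apply: ler_sum => P PA.
  by rewrite mul1r ltW ?large.
have D0 : (0 : R) <= D%:R by [].
have a0 : (0 : R) <= a%:R by [].
rewrite natrD natrX in cauchy.
(* With [s^2 = 2M], [a s <= D] turns the [M a^2] term into at most [D^2/2]. *)
have : M%:R * a%:R ^+ 2 <= (D%:R : R) ^+ 2 / 2.
  have : (a%:R * s) ^+ 2 <= (D%:R : R) ^+ 2 by rewrite ler_sqr ?nnegrE ?mulr_ge0.
  by rewrite exprMn s2; lra.
nra.
Qed.

End Linear.
End Incidence.

(** * Splitting the points by clique size *)

Lemma sqr_le_binom2 (R : numDomainType) t : (2 <= t)%N -> (t%:R : R) ^+ 2 <= 4 * 'C(t, 2)%:R.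
Proof.
move=> t2; rewrite -natrX -[4]/(2 * 2)%:R -natrM ler_nat -mulnA -(mul_bin_diag t 1) bin1.
by case: t t2 => // t t2 /=; nia.
Qed.

(* The numerical core of the dichotomy: [Q = q], [M = m], [s = √(2m)], [u]
   bounds the number of unital points, and [S*]/[E*] are the total size and
   the number of pairs of a size range. *)
Lemma small_sizes_sum_le (R : realFieldType) (Q M u E S : R) :
  0 < Q -> 0 <= M -> 0 <= S -> 0 <= E ->
  u <= 2 * Q ^+ 3 -> S ^+ 2 <= u * (4 * E) -> E < M ^+ 2 / (64 * Q) ->
  S <= 3 / 8 * (Q * M).
Proof.
move=> Q0 M0 S0 E0 u_le S2 E_lt.
have E_le : 64 * Q * E <= M ^+ 2.
  by rewrite mulrC -ler_pdivlMr ?(ltW E_lt) //; lra.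
have {}S2 : S ^+ 2 <= (Q * M) ^+ 2 / 8.
  apply: le_trans S2 _; apply: le_trans (ler_wpM2r _ u_le) _; first by rewrite mulr_ge0.
  by have := ler_wpM2l (sqr_ge0 Q) E_le; rewrite exprMn; lra.
have QM0 : 0 <= Q * M by rewrite mulr_ge0 // ltW.
have bound0 : 0 <= 3 / 8 * (Q * M) by lra.
rewrite -(@ler_sqr _ S) ?nnegrE //.
by have := sqr_ge0 (Q * M); rewrite !exprMn in S2 *; lra.
Qed.

Lemma mid_sizes_sum_ge (R : realFieldType) (Q M u Sa Sb Sc : R) :
  2 <= Q -> 0 <= M -> Q * M = 2 ^+ 24 * Q ^+ 3 ->
  M * (Q + 1) <= Sa + Sb + Sc + u -> Sa <= 3 / 8 * (Q * M) -> Sc <= 2 * M ->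
  u <= 2 * Q ^+ 3 -> 5 / 56 * (Q * M) <= Sb.
Proof. by move=> Q2 M0 QM split Sa_le Sc_le u_le; have := ler_wpM2l M0 Q2; lra. Qed.

Lemma mid_sizes_binom_ge (R : rcfType) (Q M s L Sb Eb : R) :
  0 <= Q * M -> 0 <= s -> s ^+ 2 = 2 * M -> 2 <= L -> 0 <= Eb ->
  5 / 56 * (Q * M) <= Sb -> s / L * Sb <= 4 * Eb ->
  Q * (M * Num.sqrt M) / (16 * L ^+ 2) <= Eb.
Proof.
move=> QM0 s0 s2 L2 Eb0 Sb_ge sEb; have L0 : 0 < L by lra.
rewrite mulrAC ler_pdivrMr // in sEb.
have M0 : 0 <= M by have := sqr_ge0 s; rewrite s2; lra.
set r := Num.sqrt M; have r0 : 0 <= r := sqrtr_ge0 M.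
have r0_scaled : 0 <= 7 / 5 * r by lra.
have QM0_scaled : 0 <= 5 / 56 * (Q * M) by lra.
have s_ge : 7 / 5 * r <= s.
  by rewrite -(@ler_sqr _ _ s) ?nnegrE // s2 exprMn sqr_sqrtr //; lra.
have QMr : Q * M * r <= 8 * (s * Sb).
  have := ler_pM r0_scaled QM0_scaled s_ge Sb_ge.
  have -> : 7 / 5 * r * (5 / 56 * (Q * M)) = Q * M * r / 8 by field.
  by rewrite ler_pdivrMr //; lra.
rewrite ler_pdivrMr ?mulr_gt0 ?exprn_gt0 //.
by have := ler_wpM2r (mulr_ge0 (ltW L0) Eb0) L2; rewrite expr2; lra.
Qed.

Section Degrees.
Variables (R : rcfType) (I : finType) (U : {set I}) (t : I -> nat).

Lemma sqr_sum_le_card_binom2 (p : pred I) : (forall P, p P -> 2 <= t P)%N ->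
  ((\sum_(P in U | p P) t P)%:R : R) ^+ 2
    <= #|U|%:R * (4 * (\sum_(P in U | p P) 'C(t P, 2))%:R).
Proof.
move=> p2; rewrite natr_sum.
apply: le_trans (sqr_sum_le_card_sum_sqr [pred P in U | p P] (fun P => (t P)%:R : R)) _.
apply: ler_pM => //; first by rewrite sumr_ge0 // => P _; exact: sqr_ge0.
  by rewrite ler_nat subset_leq_card //; apply/subsetP => P; rewrite inE => /andP[].
by rewrite natr_sum mulr_sumr ler_sum // => P /andP[_ /p2]; exact: sqr_le_binom2.
Qed.

Lemma mul_lbound_sum_le_binom2 (p : pred I) (theta : R) :
    (forall P, p P -> (2 <= t P)%N /\ theta <= (t P)%:R) ->
  theta * (\sum_(P in U | p P) t P)%:R <= 4 * (\sum_(P in U | p P) 'C(t P, 2))%:R.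
Proof.
move=> pt; rewrite !natr_sum mulr_sumr mulr_sumr ler_sum // => P /andP[_ /pt[t2 thetat]].
by apply: le_trans (sqr_le_binom2 R t2); rewrite mulrC expr2 ler_wpM2l.
Qed.

Lemma sum_le_split_by_size (theta s : R) :
  (\sum_(P in U) t P
    <= \sum_(P in U | (2 <= t P) && ((t P)%:R <= theta)%R) t P
     + \sum_(P in U | (2 <= t P) && (theta < (t P)%:R)%R && ((t P)%:R <= s)%R) t P
     + \sum_(P in U | (s < (t P)%:R)%R) t P + #|U|)%N.
Proof.
rewrite -sum1_card !big_mkcondr -!big_split /=; apply: leq_sum => P _.
have [t1 | _] := ltnP (t P) 2; first by apply: leq_trans (leq_addl _ 1); rewrite -ltnS.
case: (lerP (t P)%:R theta) => _; first by rewrite -!addnA leq_addr.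
case: (lerP (t P)%:R s) => _; first by rewrite add0n -addnA leq_addr.
by rewrite !add0n leq_addr.
Qed.

Lemma dichotomy_by_size (q : nat) (L : R) :
  let m := (2 ^ 24 * q ^ 2)%N in let s := Num.sqrt (2 * m%:R : R) in
  (2 <= q)%N -> (#|U| <= 2 * q ^ 3)%N -> (\sum_(P in U) t P = m * q.+1)%N ->
  (\sum_(P in U | (s < (t P)%:R)%R) t P <= 2 * m)%N -> 2 <= L ->
  ((\sum_(P in U | (2 <= t P)%N && ((t P)%:R <= s / L)) 'C(t P, 2))%:R
      >= (m%:R ^+ 2 / (64 * q%:R) : R))
  \/
  ((\sum_(P in U | (2 <= t P)%N && (s / L < (t P)%:R) && ((t P)%:R <= s)) 'C(t P, 2))%:R
     >= (q%:R * (m%:R * Num.sqrt (m%:R : R)) / (16 * L ^+ 2) : R)).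
Proof.
move=> m s q2 U_le sum_t large_le L2.
set Q : R := q%:R; set M : R := m%:R.
set Ea := (\sum_(P in U | _ && ((t P)%:R <= s / L)) _)%:R.
set Eb := (\sum_(P in U | _ && (s / L < _) && _) _)%:R.
have [Ea_ge | Ea_lt] := lerP (M ^+ 2 / (64 * Q)) Ea; [by left | right].
set Sa : R := (\sum_(P in U | (2 <= t P)%N && ((t P)%:R <= s / L)) t P)%:R.
set Sb : R := (\sum_(P in U | (2 <= t P)%N && (s / L < (t P)%:R) && ((t P)%:R <= s)) t P)%:R.
have Q2 : 2 <= Q by rewrite /Q (ler_nat R 2).
have QM : Q * M = 2 ^+ 24 * Q ^+ 3 by rewrite /M /Q natrM !natrX; ring.
have U_leR : #|U|%:R <= 2 * Q ^+ 3 by rewrite /Q -natrX -natrM ler_nat.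
have Sa_le : Sa <= 3 / 8 * (Q * M).
  apply: (small_sizes_sum_le _ _ _ _ U_leR _ Ea_lt) => //; first exact: lt_le_trans Q2.
  by apply: sqr_sum_le_card_binom2 => P /andP[].
have Sb_ge : 5 / 56 * (Q * M) <= Sb.
  have large_leR : (\sum_(P in U | s < (t P)%:R) t P)%:R <= 2 * M :> R.
    by rewrite -natrM ler_nat.
  apply: (mid_sizes_sum_ge Q2 _ QM _ Sa_le large_leR U_leR) => //.
  have := sum_le_split_by_size (s / L) s.
  by rewrite sum_t -(ler_nat R) !natrD natrM -/M -/Sa -/Sb -natr1.
apply: (@mid_sizes_binom_ge R Q M s L Sb Eb _ _ _ L2 _ Sb_ge) => //.
- by rewrite mulr_ge0 // (le_trans _ Q2).
- exact: sqrtr_ge0.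
- by rewrite /s sqr_sqrtr // mulr_ge0.
- by apply: mul_lbound_sum_le_binom2 => P /andP[/andP[t2 /ltW]].
Qed.

End Degrees.

Lemma ln_nat_ge2 (R : realType) n : (12 <= n)%N -> 2 <= ln (n%:R : R).
Proof.
move=> n12.
have e3 : expR (3^-1 : R) <= 3 / 2.
  have := @expR_ge1Dx R (- 3^-1); have := @expR_gt0 R (3^-1).
  have : expR (3^-1 : R) * expR (- 3^-1) = 1 by rewrite -expRD subrr expR0.
  nra.
have e2 : expR (2 : R) <= 12.
  rewrite (_ : 2 = 6%:R * 3^-1); last by field.
  rewrite expRM_natl; apply: le_trans (_ : (3 / 2) ^+ 6 <= 12); last by rewrite !exprS expr0; lra.
  by apply: lerXn2r => //; rewrite nnegrE ?ltW ?expR_gt0 //; lra.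
have n0 : (0 < n)%N by apply: leq_trans n12.
rewrite -[X in X <= _](expRK 2) ler_ln ?posrE ?expR_gt0 ?ltr0n //.
by apply: le_trans e2 _; rewrite (ler_nat R 12 n).
Qed.

(** * Secants of the Hermitian unital *)

Section Secants.
Variables (F : finFieldType) (q : nat) (X : {set {set {set 'rV[F]_3}}}).
Hypothesis X_secants : X \subset secants F q.

Lemma Tsize_degree P : Tsize q X P = degree X P.
Proof.
apply: eq_card => L; rewrite !inE.
by case: (boolP (L \in X)) => //= /(subsetP X_secants); rewrite inE => ->.
Qed.

Lemma sum_Tsize : (\sum_(P in unital F q) Tsize q X P = #|X| * q.+1)%N.
Proof.
under eq_bigr do rewrite Tsize_degree.
rewrite sum_degree -sum_nat_const; apply: eq_bigr => L /(subsetP X_secants).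
by rewrite inE setIC => /andP[_ /eqP].
Qed.

Lemma codegree_secants_le1 P P' : P \in unital F q -> P' \in unital F q -> P != P' ->
  (codegree X P P' <= 1)%N.
Proof.
move=> PU P'U PP'; apply/card_le1_eqP => L L'; rewrite !inE.
move=> /andP[/(subsetP X_secants) + /andP[PL P'L]] /andP[/(subsetP X_secants) + /andP[PL' P'L']].
rewrite !inE => /andP[LPG _] /andP[L'PG _].
by apply: (PG_line_uniq _ _ PP') => //; apply: (subsetP (unital_sub_PG_points F q)).
Qed.

Lemma sum_large_Tsize_le (R : realFieldType) (s : R) : 0 <= s -> s ^+ 2 = 2 * #|X|%:R ->
  (\sum_(P in unital F q | (s < (Tsize q X P)%:R)%R) Tsize q X P <= 2 * #|X|)%N.
Proof.
move=> s0 s2; set A := [set P in unital F q | s < (Tsize q X P)%:R].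
rewrite (eq_bigl [in A]) => [|P]; last by rewrite inE.
under eq_bigr do rewrite Tsize_degree.
apply: (sum_large_degree_le _ s0 s2) => [P P' | P]; rewrite !inE.
  by move=> /andP[PU _] /andP[P'U _]; exact: codegree_secants_le1.
by rewrite Tsize_degree => /andP[].
Qed.

End Secants.

Theorem mainTheorem6 (R : realType) (F : finFieldType) (q : nat)
  (hq2 : (2 <= q)%N) (hqpp : prime_power q) (hF : #|F| = (q ^ 2)%N)
  (X : {set {set {set 'rV[F]_3}}}) (hX : X \subset secants F q)
  (hXm : #|X| = (2 ^ 24 * q ^ 2)%N) :
  let n := (q ^ 2 * (q ^ 2 - q + 1))%N in
  let m := (2 ^ 24 * q ^ 2)%N in
  let bnd : R := Num.sqrt (2 * m%:R : R) / ln (n%:R : R) in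
  ((\sum_(P in unital F q | (2 <= Tsize q X P)%N && ((Tsize q X P)%:R <= bnd))
      'C(Tsize q X P, 2))%:R >= (m%:R ^+ 2 / (64 * q%:R) : R))
  \/
  ((\sum_(P in unital F q | (2 <= Tsize q X P)%N && (bnd < (Tsize q X P)%:R)
                           && ((Tsize q X P)%:R <= Num.sqrt (2 * m%:R : R)))
      'C(Tsize q X P, 2))%:R
     >= (q%:R * (m%:R * Num.sqrt (m%:R : R)) / (16 * ln (n%:R : R) ^+ 2) : R)).
Proof.
move=> n m bnd.
have U_le : (#|unital F q| <= 2 * q ^ 3)%N.
  by apply: leq_trans (card_unital_le F q) _; rewrite hF; nia.
apply: (dichotomy_by_size (t := Tsize q X) (L := ln (n%:R : R)) hq2 U_le).
- by rewrite sum_Tsize // hXm.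
- rewrite -hXm; apply: sum_large_Tsize_le; rewrite ?sqrtr_ge0 // sqr_sqrtr hXm //.
  by rewrite mulr_ge0.
- by apply: ln_nat_ge2; rewrite /n; nia.
Qed.
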